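(* Let $A\in\mathbb{R}^{n\times n}$, let $s$ be an integer with $1\leq s<d(A)$, and let $v_0\in\mathbb{R}^n$ with $\|v_0\|=1$ and $d(A,v_0)\geq s+1$. Then all vectors of the Arnoldi cross iteration ACI($s$) started at $v_0$ are well defined (i.e. $\widetilde w_k\neq 0$ and $\widetilde v_{k+1}\neq 0$ for all $k$, with $d(A,v_k)\geq s+1$ and $d(A^T,w_k)\geq s+1$), and $$\|\widetilde w_k\|\leq\|\widetilde v_{k+1}\|\leq\|\widetilde w_{k+1}\|\leq\|\widetilde v_{k+2}\|\leq\Phi_s(A^T)=\Phi_s(A),\qquad k=0,1,2,\dots.$$ Moreover, $\|\widetilde w_k\|=\|\widetilde v_{k+1}\|$ holds if and only if $v_k=\alpha v_{k+1}$ for some $\alpha\neq 0$, and $\|\widetilde v_{k+1}\|=\|\widetilde w_{k+1}\|$ holds if and only if $w_k=\beta w_{k+1}$ for some $\beta\neq 0$.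
   Context: Notation: for $A\in\mathbb{R}^{n\times n}$, $d(A)$ is the degree of the minimal polynomial of $A$, $d(A,v)$ is the grade of $v$ w.r.t. $A$ (degree of the monic polynomial $p$ of smallest degree with $p(A)v=0$), $\mathcal{K}_k(A,v)=\mathrm{span}\{v,Av,\dots,A^{k-1}v\}$, $\mathcal{M}_s$ is the set of real monic polynomials of degree $s$, and $\|\cdot\|$ is the Euclidean norm. For a matrix $B$ and a vector $u$ with $d(B,u)\geq s$, let $P_s(\cdot\,;u)_B\in\mathcal{M}_s$ be the unique monic polynomial with $P_s(B;u)u\perp\mathcal{K}_s(B,u)$ (equivalently $P_s(B;u)u\in B^su+\mathcal{K}_s(B,u)$ orthogonal to $\mathcal{K}_s(B,u)$). The Arnoldi cross iteration ACI($s$) started at $v_0$ is: for $k=0,1,2,\dots$: $\widetilde w_k=P_s(A;v_k)v_k$ (polynomial determined with respect to $A$), $w_k=\widetilde w_k/\|\widetilde w_k\|$, $\widetilde v_{k+1}=P_s(A^T;w_k)w_k$ (polynomial determined with respect to $A^T$, so $\widetilde v_{k+1}\perp\mathcal{K}_s(A^T,w_k)$), $v_{k+1}=\widetilde v_{k+1}/\|\widetilde v_{k+1}\|$. Finally $\Phi_s(A):=\max_{v\in\mathbb{R}^n,\|v\|=1}\min_{p\in\mathcal{M}_s}\|p(A)v\|$. *)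

From HB Require Import structures.
From mathcomp Require Import all_boot all_order all_algebra.
From mathcomp Require Import boolp classical_sets reals.
Set Implicit Arguments. Unset Strict Implicit. Unset Printing Implicit Defensive.
Import Order.TTheory GRing.Theory Num.Theory.
Local Open Scope ring_scope.
Local Open Scope classical_set_scope.

Section ACI.
Variables (R : realType) (n : nat).
Implicit Types (A B : 'M[R]_n) (u v w : 'cV[R]_n) (p : {poly R}).

Definition dotv u v : R := (u^T *m v) 0 0.
Definition normv v : R := Num.sqrt (dotv v v).

Definition pmx A p : 'M[R]_n := \sum_(i < size p) p`_i *: A ^+ i.
Definition pmv A p v : 'cV[R]_n := pmx A p *m v.

(* s < d(A): every monic polynomial annihilating A has degree > s *)
Definition minpoly_deg_gt A (s : nat) : Prop :=
  forall p, p \is monic -> pmx A p = 0 -> (s < (size p).-1)%N.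

(* d(A,v) >= k: every monic polynomial p with p(A)v = 0 has degree >= k *)
Definition grade_ge A v (k : nat) : Prop :=
  forall p, p \is monic -> pmv A p v = 0 -> (k <= (size p).-1)%N.

Definition is_P B u (s : nat) p : Prop :=
  p \is monic /\ size p = s.+1 /\
  forall j : nat, (j < s)%N -> dotv (B ^+ j *m u) (pmv B p u) = 0.

(* P_s(. ; u)_B : the (unique, when d(B,u) >= s) such polynomial *)
Definition Ppoly B u (s : nat) : {poly R} := xget 0 [set p | is_P B u s p].

Definition normalize v : 'cV[R]_n := (normv v)^-1 *: v.

Definition aci_wt A s v := pmv A (Ppoly A v s) v.
Definition aci_vt A s w := pmv A^T (Ppoly A^T w s) w.

Fixpoint aci_v A s v0 (k : nat) : 'cV[R]_n :=
  match k with
  | 0 => v0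
  | k'.+1 => normalize (aci_vt A s (normalize (aci_wt A s (aci_v A s v0 k'))))
  end.
Definition aci_wtil A s v0 k := aci_wt A s (aci_v A s v0 k).
Definition aci_w A s v0 k := normalize (aci_wtil A s v0 k).
(* v~_{k+1} is [aci_vtil A s v0 k.+1]; by convention v~_0 := v0 (unused) *)
Definition aci_vtil A s v0 (k : nat) : 'cV[R]_n :=
  match k with 0 => v0 | k'.+1 => aci_vt A s (aci_w A s v0 k') end.

Definition Phi (s : nat) A : R :=
  sup [set x | exists v, normv v = 1 /\
         x = inf [set y | exists p, p \is monic /\ size p = s.+1 /\
                                    y = normv (pmv A p v)]].
End ACI.

(* Let x~ = P_s(B;u)(B) u and x = x~ / |x~|.  Since x~ is orthogonal to K_s(B,u) and
   r(B)u - x~ lies in K_s(B,u) for every monic r of degree s,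
   <r(B^T) x, u> = <x, r(B) u> = |x~|.  Cauchy-Schwarz against the unit vector x shows
   that x~ attains the min in Phi_s(B) at u; against the unit vector u it gives
   |x~| <= |r(B^T) x|, with equality iff u is a positive multiple of r(B^T) x.  With
   r = P_s(B^T;x) this is one half-step of ACI(s) (for B = A, then B = A^T); for general r
   it bounds the min for B at u by the min for B^T at x, whence Phi_s(A) <= Phi_s(A^T)
   and, by symmetry, equality.  P_s(B;u) exists because d(B,u) >= s makes the Gram
   matrix of the Krylov basis invertible. *)

From HB Require Import structures.
From mathcomp Require Import all_boot all_order all_algebra.
From mathcomp Require Import boolp classical_sets reals.
From mathcomp Require Import ring lra.
Import Order.TTheory GRing.Theory Num.Theory.
Local Open Scope ring_scope.
Set Implicit Arguments. Unset Strict Implicit. Unset Printing Implicit Defensive.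

Section InnerProduct.
Variables (R : realType) (n : nat).
Implicit Types (a u v w : 'cV[R]_n) (M : 'M[R]_n).

Lemma dotvE u v : dotv u v = \sum_i u i 0 * v i 0.
Proof. by rewrite /dotv mxE; apply: eq_bigr => i _; rewrite mxE. Qed.

Lemma dotvC u v : dotv u v = dotv v u.
Proof. by rewrite !dotvE; apply: eq_bigr => i _; rewrite mulrC. Qed.

Lemma dotvDr u v w : dotv u (v + w) = dotv u v + dotv u w.
Proof. by rewrite /dotv mulmxDr mxE. Qed.

Lemma dotvZr u v c : dotv u (c *: v) = c * dotv u v.
Proof. by rewrite /dotv -scalemxAr mxE. Qed.

Lemma dotvDl u v w : dotv (v + w) u = dotv v u + dotv w u.
Proof. by rewrite dotvC dotvDr !(dotvC u). Qed.

Lemma dotvZl u v c : dotv (c *: v) u = c * dotv v u.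
Proof. by rewrite dotvC dotvZr dotvC. Qed.

Lemma dotvNr u v : dotv u (- v) = - dotv u v.
Proof. by rewrite -scaleN1r dotvZr mulN1r. Qed.

Lemma dotvNl u v : dotv (- v) u = - dotv v u.
Proof. by rewrite dotvC dotvNr dotvC. Qed.

Lemma dotv0r u : dotv u 0 = 0.
Proof. by rewrite /dotv mulmx0 mxE. Qed.

Lemma dotv0l u : dotv 0 u = 0.
Proof. by rewrite dotvC dotv0r. Qed.

Lemma dotv_sumr u I (r : seq I) (P : pred I) (F : I -> 'cV[R]_n) :
  dotv u (\sum_(i <- r | P i) F i) = \sum_(i <- r | P i) dotv u (F i).
Proof. exact: (big_morph _ (dotvDr u) (dotv0r u)). Qed.

Lemma dotv_trmx M u v : dotv (M^T *m u) v = dotv u (M *m v).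
Proof. by rewrite /dotv trmx_mul trmxK mulmxA. Qed.

Lemma dotvv_ge0 u : 0 <= dotv u u.
Proof. by rewrite dotvE sumr_ge0 // => i _; rewrite -expr2 sqr_ge0. Qed.

Lemma dotvv_eq0 u : (dotv u u == 0) = (u == 0).
Proof.
apply/idP/eqP => [|->]; last by rewrite dotv0r.
rewrite dotvE psumr_eq0 => [/allP u0|i _]; last by rewrite -expr2 sqr_ge0.
apply/matrixP => i j; rewrite (ord1 j) !mxE.
by have /implyP/(_ isT) := u0 i (mem_index_enum i); rewrite -expr2 sqrf_eq0 => /eqP.
Qed.

Lemma normv_ge0 u : 0 <= normv u.
Proof. exact: sqrtr_ge0. Qed.

Lemma normv_sqr u : normv u ^+ 2 = dotv u u.
Proof. by rewrite /normv sqr_sqrtr // dotvv_ge0. Qed.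

Lemma normv_eq0 u : (normv u == 0) = (u == 0).
Proof. by rewrite -dotvv_eq0 -normv_sqr sqrf_eq0. Qed.

Lemma normv0 : normv (0 : 'cV[R]_n) = 0.
Proof. by apply/eqP; rewrite normv_eq0. Qed.

Lemma normv_gt0 u : (0 < normv u) = (u != 0).
Proof. by rewrite lt_def normv_eq0 normv_ge0 andbT. Qed.

Lemma normvZ u c : normv (c *: u) = `|c| * normv u.
Proof. by rewrite /normv dotvZl dotvZr mulrA -expr2 sqrtrM ?sqr_ge0 // sqrtr_sqr. Qed.

Lemma normv_normalize u : u != 0 -> normv (normalize u) = 1.
Proof.
rewrite -normv_gt0 => u_gt0.
by rewrite normvZ ger0_norm ?invr_ge0 ?normv_ge0 ?mulVf ?gt_eqF.
Qed.

Lemma dotv_normalize u : dotv (normalize u) u = normv u.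
Proof.
have [->|u0] := eqVneq u 0; first by rewrite dotv0r normv0.
have u_gt0 : 0 < normv u by rewrite normv_gt0.
by rewrite dotvZl -normv_sqr expr2 mulKf ?gt_eqF.
Qed.

(* Cauchy-Schwarz against a unit vector and its equality case both come from this identity. *)
Lemma dotvv_normalize_subr a u : a != 0 -> normv u = 1 ->
  dotv (normalize a - u) (normalize a - u) = 2 - 2 * (dotv a u / normv a).
Proof.
move=> a0 u1.
have aa : dotv (normalize a) (normalize a) = 1.
  by rewrite -normv_sqr normv_normalize ?expr1n.
have uu : dotv u u = 1 by rewrite -normv_sqr u1 expr1n.
rewrite !(dotvDl, dotvDr, dotvNl, dotvNr) aa uu (dotvC u) dotvZl; ring.
Qed.

Lemma dotv_le_normv a u : normv u = 1 -> dotv a u <= normv a.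
Proof.
move=> u1; have [->|a0] := eqVneq a 0; first by rewrite dotv0l normv0.
have a_gt0 : 0 < normv a by rewrite normv_gt0.
have := dotvv_ge0 (normalize a - u); rewrite dotvv_normalize_subr //.
by rewrite subr_ge0 -[leRHS]mulr1 ler_pM2l // ler_pdivrMr // mul1r.
Qed.

Lemma dotv_eq_normv a u : normv u = 1 -> a != 0 -> dotv a u = normv a ->
  u = normalize a.
Proof.
move=> u1 a0 au; have a_gt0 : 0 < normv a by rewrite normv_gt0.
apply/eqP; rewrite eq_sym -subr_eq0 -dotvv_eq0 dotvv_normalize_subr //.
by rewrite au divff ?lt0r_neq0 // mulr1 subrr.
Qed.

Lemma normv_eq_dotv_unit y u c : normv u = 1 -> 0 < c -> dotv y u = c ->
  c = normv y <-> exists al : R, al != 0 /\ u = al *: normalize y.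
Proof.
move=> u1 c_gt0 yu.
have y0 : y != 0 by apply: contraTneq c_gt0 => y0; rewrite -yu y0 dotv0l ltxx.
split=> [cy|[al [_ u_al]]].
  by exists 1; rewrite oner_neq0 scale1r; split=> //; apply: dotv_eq_normv; rewrite ?yu.
have al1 : `|al| = 1 by move: u1; rewrite u_al normvZ normv_normalize // mulr1.
have yu_al : dotv y u = al * normv y by rewrite u_al dotvZr dotvC dotv_normalize.
have : 0 < al * normv y by rewrite -yu_al yu.
rewrite pmulr_lgt0 ?normv_gt0 // => al_gt0.
by rewrite -yu yu_al -[al]gtr0_norm // al1 mul1r.
Qed.

Lemma normvN u : normv (- u) = normv u.
Proof. by rewrite -scaleN1r normvZ normrN1 mul1r. Qed.

Lemma normv_mulmx_bounded M :
  exists C, forall v, normv v = 1 -> normv (M *m v) <= C.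
Proof.
exists (Num.sqrt (\sum_i normv (row i M)^T ^+ 2)) => v v1.
apply: ler_wsqrtr; rewrite dotvE; apply: ler_sum => i _.
have -> : (M *m v) i 0 = dotv (row i M)^T v.
  by rewrite dotvE mxE; apply: eq_bigr => j _; rewrite !mxE.
have := dotv_le_normv (row i M)^T v1; have := dotv_le_normv (- (row i M)^T) v1.
rewrite dotvNl normvN -expr2; have := normv_ge0 (row i M)^T; nra.
Qed.

End InnerProduct.

Section MatrixPolynomial.
Variables (R : realType) (n : nat) (B : 'M[R]_n).
Implicit Types (p q r : {poly R}) (u v : 'cV[R]_n).

Lemma trmxX k : (B ^+ k)^T = B^T ^+ k.
Proof.
elim: k => [|k IHk]; first by rewrite !expr0 trmx1.
by rewrite exprS exprSr -!mulmxE trmx_mul IHk.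
Qed.

Lemma pmx_trmx p : pmx B^T p = (pmx B p)^T.
Proof. by rewrite /pmx raddf_sum; apply: eq_bigr => i _; rewrite [RHS]linearZ /= trmxX. Qed.

Lemma dotv_pmv_trmx p u v : dotv (pmv B^T p u) v = dotv u (pmv B p v).
Proof. by rewrite /pmv pmx_trmx dotv_trmx. Qed.

Lemma pmv_widen p (N : nat) v : (size p <= N)%N ->
  pmv B p v = \sum_(i < N) p`_i *: (B ^+ i *m v).
Proof.
move=> le_p_N; rewrite /pmv /pmx mulmx_suml.
under eq_bigr do rewrite -scalemxAl.
rewrite (big_ord_widen _ (fun i => p`_i *: (B ^+ i *m v)) le_p_N) big_mkcond.
apply: eq_bigr => i _.
by case: ltnP => // le_p_i; rewrite nth_default ?scale0r.
Qed.

Lemma pmv0 v : pmv B 0 v = 0.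
Proof. by rewrite (pmv_widen (N := 0)) ?size_poly0 // big_ord0. Qed.

Lemma pmvD p q v : pmv B (p + q) v = pmv B p v + pmv B q v.
Proof.
rewrite !(pmv_widen (N := maxn (size p) (size q))) ?size_polyD ?leq_maxl ?leq_maxr //.
by rewrite -big_split; apply: eq_bigr => i _; rewrite coefD scalerDl.
Qed.

Lemma pmvZ c p v : pmv B (c *: p) v = c *: pmv B p v.
Proof.
rewrite !(pmv_widen (N := size p)) ?size_scale_leq // scaler_sumr.
by apply: eq_bigr => i _; rewrite coefZ scalerA.
Qed.

Lemma pmv_sum v I (s : seq I) (P : pred I) (F : I -> {poly R}) :
  pmv B (\sum_(i <- s | P i) F i) v = \sum_(i <- s | P i) pmv B (F i) v.
Proof. exact: (big_morph _ (fun p q => pmvD p q v) (pmv0 v)). Qed.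

Lemma pmv_monic r s v : r \is monic -> size r = s.+1 ->
  pmv B r v = B ^+ s *m v + \sum_(i < s) r`_i *: (B ^+ i *m v).
Proof.
move=> mr sr; rewrite (pmv_widen (N := s.+1)) ?sr // big_ord_recr /= addrC.
have -> : r`_s = 1 by move/monicP: mr; rewrite /lead_coef sr.
by rewrite scale1r.
Qed.

Lemma pmvXn k v : pmv B 'X^k v = B ^+ k *m v.
Proof.
rewrite (pmv_monic v (monicXn _ k) (size_polyXn _ k)) big1 ?addr0 // => i _.
by rewrite coefXn ltn_eqF // scale0r.
Qed.

Lemma pmvXnM k p v : pmv B ('X^k * p) v = B ^+ k *m pmv B p v.
Proof.
rewrite (pmv_widen (N := k + size p)); last first.
  by rewrite (leq_trans (size_polyMleq _ _)) // size_polyXn addSn.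
rewrite big_split_ord /= big1 ?add0r => [|i _]; last first.
  by rewrite coefXnM /= ltn_ord scale0r.
rewrite (pmv_widen (N := size p)) // mulmx_sumr; apply: eq_bigr => i _.
by rewrite coefXnM /= ltnNge leq_addr /= addKn exprD -mulmxE -mulmxA scalemxAr.
Qed.

Lemma grade_ge_leq k l v : (k <= l)%N -> grade_ge B v l -> grade_ge B v k.
Proof. by move=> le_kl gv p mp pv0; apply: leq_trans le_kl (gv p mp pv0). Qed.

Lemma grade_ge_pmv_eq0 s q v : grade_ge B v s -> (size q <= s)%N ->
  pmv B q v = 0 -> q = 0.
Proof.
move=> gv le_q_s qv0; apply/eqP; apply: contraTT le_q_s => q0.
have lq0 : lead_coef q != 0 by rewrite lead_coef_eq0.
have mq : (lead_coef q)^-1 *: q \is monic by rewrite monicE lead_coefZ mulVf.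
have := gv _ mq; rewrite pmvZ qv0 scaler0 size_scale ?invr_eq0 // => /(_ erefl).
by rewrite -ltnNge; have := size_poly_gt0 q; rewrite q0; case: (size q).
Qed.
Lemma not_grade_geP s v : ~ grade_ge B v s.+1 ->
  exists r, [/\ r \is monic, size r = s.+1 & pmv B r v = 0].
Proof.
move=> /existsNP[q /not_implyP[mq /not_implyP[qv0 /negP lt_q_s]]].
have le_q_s : (size q <= s.+1)%N by move: lt_q_s; rewrite -ltnNge; case: (size q).
have q0 : q != 0 by apply: contraTneq mq => ->; rewrite monicE lead_coef0 eq_sym oner_eq0.
exists ('X^(s.+1 - size q) * q); split.
- by rewrite monicMl ?monicXn.
- by rewrite size_monicM ?monicXn // size_polyXn addSn subnK.
- by rewrite pmvXnM qv0 mulmx0.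
Qed.

End MatrixPolynomial.

Section CoordinatePolynomial.
Variables (R : ringType) (s : nat) (c : 'I_s -> R).

Lemma size_sum_ordXn : (size (\sum_(i < s) c i *: 'X^i)%R <= s)%N.
Proof.
apply: (leq_trans (size_sum _ _ _)); apply/bigmax_leqP => i _.
by rewrite (leq_trans (size_scale_leq _ _)) // size_polyXn.
Qed.

Lemma coef_sum_ordXn (j : 'I_s) : (\sum_(i < s) c i *: 'X^i)`_j = c j.
Proof. by rewrite coef_sumMXn (big_pred1 j). Qed.

End CoordinatePolynomial.

Section Krylov.
Variables (R : realType) (n : nat) (B : 'M[R]_n) (u : 'cV[R]_n) (s : nat).

Definition krylov : 'M[R]_(s, n) := \matrix_(i < s, j < n) (B ^+ i *m u) j 0.

Lemma krylov_mulmx y (i : 'I_s) : (krylov *m y) i 0 = dotv (B ^+ i *m u) y.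
Proof. by rewrite dotvE mxE; apply: eq_bigr => j _; rewrite mxE. Qed.

Lemma pmv_sum_ordXn (c : 'cV[R]_s) :
  pmv B (\sum_(i < s) c i 0 *: 'X^i) u = krylov^T *m c.
Proof.
rewrite pmv_sum; apply/matrixP => j k; rewrite (ord1 k) !mxE summxE.
by apply: eq_bigr => i _; rewrite pmvZ pmvXn !mxE mulrC.
Qed.

Lemma row_free_krylov : grade_ge B u s -> row_free krylov.
Proof.
move=> gu; apply: inj_row_free => z zK0.
have q0 : \sum_(i < s) z^T i 0 *: 'X^i = 0.
  apply: grade_ge_pmv_eq0 gu (size_sum_ordXn _) _.
  by rewrite pmv_sum_ordXn -trmx_mul zK0 trmx0.
apply/rowP => j; have := congr1 (fun p : {poly R} => p`_j) q0.
by rewrite coef_sum_ordXn coef0 !mxE.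
Qed.

End Krylov.

Lemma unitmx_mulmx_trmx (R : realType) m k (K : 'M[R]_(m, k)) :
  row_free K -> K *m K^T \in unitmx.
Proof.
move=> fK; rewrite -row_free_unit; apply: inj_row_free => z zG0.
apply: (row_free_inj fK); rewrite mul0mx; apply/eqP; rewrite -trmx_eq0 -dotvv_eq0.
by rewrite /dotv trmxK trmx_mul mulmxA -(mulmxA z) zG0 mul0mx mxE.
Qed.

Lemma is_P_exists (R : realType) n (B : 'M[R]_n) u s :
  grade_ge B u s -> exists p, is_P B u s p.
Proof.
move=> gu; set K := krylov B u s.
have GK : K *m K^T \in unitmx by apply/unitmx_mulmx_trmx/row_free_krylov.
(* c solves the normal equations K K^T c = - K B^s u, i.e. K (B^s u + K^T c) = 0. *)
pose c := - (invmx (K *m K^T) *m (K *m (B ^+ s *m u))).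
exists ('X^s + \sum_(i < s) c i 0 *: 'X^i); split; last split.
- by rewrite monicE lead_coefDl ?lead_coefXn // size_polyXn ltnS size_sum_ordXn.
- by rewrite size_polyDl ?size_polyXn // ltnS size_sum_ordXn.
move=> j lt_j_s; rewrite -(krylov_mulmx _ _ _ (Ordinal lt_j_s)).
rewrite pmvD pmvXn pmv_sum_ordXn -/K mulmxDr /c !mulmxN (mulmxA K K^T).
by rewrite (mulmxA (K *m K^T)) mulmxV // mul1mx subrr mxE.
Qed.

Lemma Ppoly_spec (R : realType) n (B : 'M[R]_n) u s :
  grade_ge B u s -> is_P B u s (Ppoly B u s).
Proof. by move=> gu; apply: xgetPex; apply: is_P_exists. Qed.

Section OrthogonalResidual.
Variables (R : realType) (n : nat) (B : 'M[R]_n) (u : 'cV[R]_n) (s : nat).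
Variable P : {poly R}.
Hypotheses (PBu : is_P B u s P) (gu : grade_ge B u s.+1).

Local Notation x := (pmv B P u).

Lemma pmv_P_neq0 : x != 0.
Proof.
by case: PBu => mP [sP _]; apply/eqP => x0; have := gu mP x0; rewrite sP ltnn.
Qed.

(* r - P has degree < s, so r(B)u - P(B)u lies in K_s(B,u), which is orthogonal to x. *)
Lemma dotv_pmv_P_monic r : r \is monic -> size r = s.+1 ->
  dotv x (pmv B r u) = normv x ^+ 2.
Proof.
case: PBu => mP [sP orth].
have top q : q \is monic -> size q = s.+1 -> dotv x (pmv B q u) = dotv x (B ^+ s *m u).
  move=> mq sq; rewrite (pmv_monic _ _ mq sq) dotvDr dotv_sumr big1 ?addr0 // => i _.
  by rewrite dotvZr dotvC orth ?mulr0.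
by move=> mr sr; rewrite top // -(top P) // normv_sqr.
Qed.

Lemma dotv_pmv_trmx_P r : r \is monic -> size r = s.+1 ->
  dotv (pmv B^T r (normalize x)) u = normv x.
Proof.
move=> mr sr; have x_neq0 : normv x != 0 by rewrite normv_eq0 pmv_P_neq0.
by rewrite dotv_pmv_trmx dotvZl dotv_pmv_P_monic // expr2 mulKf.
Qed.

Lemma normv_pmv_P_min r : r \is monic -> size r = s.+1 ->
  normv x <= normv (pmv B r u).
Proof.
move=> mr sr; rewrite -(dotv_pmv_trmx_P mr sr) dotv_pmv_trmx dotvC.
exact/dotv_le_normv/normv_normalize/pmv_P_neq0.
Qed.

Lemma normv_pmv_P_le_trmx r : normv u = 1 -> r \is monic -> size r = s.+1 ->
  normv x <= normv (pmv B^T r (normalize x)).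
Proof. by move=> u1 mr sr; rewrite -{1}(dotv_pmv_trmx_P mr sr) dotv_le_normv. Qed.

Lemma grade_trmx_normalize_pmv_P : grade_ge B^T (normalize x) s.+1.
Proof.
apply: contrapT => /not_grade_geP[r [mr sr r0]].
have := dotv_pmv_trmx_P mr sr; rewrite r0 dotv0l => /esym/eqP.
by rewrite normv_eq0 (negPf pmv_P_neq0).
Qed.

End OrthogonalResidual.

Section MinResidual.
Local Open Scope classical_set_scope.
Variables (R : realType) (n : nat) (s : nat).
Implicit Types (B : 'M[R]_n) (v : 'cV[R]_n).

Definition min_residual B v : R :=
  inf [set y | exists p, p \is monic /\ size p = s.+1 /\ y = normv (pmv B p v)].

Lemma PhiE B : Phi s B = sup [set m | exists v, normv v = 1 /\ m = min_residual B v].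
Proof. by []. Qed.

Lemma min_residual_le B v r : r \is monic -> size r = s.+1 ->
  min_residual B v <= normv (pmv B r v).
Proof.
by move=> mr sr; apply: ge_inf; [exists 0 => _ [p [_ [_ ->]]]; apply: normv_ge0 | exists r].
Qed.

Lemma min_residual_ge B v c :
  (forall r, r \is monic -> size r = s.+1 -> c <= normv (pmv B r v)) ->
  c <= min_residual B v.
Proof.
move=> c_le; apply: lb_le_inf => [|_ [p [mp [sp ->]]]]; last exact: c_le.
by exists (normv (pmv B 'X^s v)), 'X^s; rewrite monicXn size_polyXn.
Qed.

Lemma min_residual_ge0 B v : 0 <= min_residual B v.
Proof. by apply: min_residual_ge => r _ _; apply: normv_ge0. Qed.

Lemma min_residual_P B v P : is_P B v s P -> grade_ge B v s.+1 ->
  min_residual B v = normv (pmv B P v).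
Proof.
move=> PBv gv; have [mP [sP _]] := PBv; apply/le_anti/andP; split.
  exact: min_residual_le.
by apply: min_residual_ge => r; apply: normv_pmv_P_min.
Qed.

Lemma min_residual_le_Phi B v : normv v = 1 -> min_residual B v <= Phi s B.
Proof.
move=> v1; apply: ub_le_sup; last by exists v.
have [C le_C] := normv_mulmx_bounded (B ^+ s).
exists C => _ [w [w1 ->]]; apply: le_trans (le_C w w1).
by rewrite -pmvXn min_residual_le ?monicXn ?size_polyXn.
Qed.

Lemma min_residual_eq0 B v r : r \is monic -> size r = s.+1 -> pmv B r v = 0 ->
  min_residual B v = 0.
Proof.
move=> mr sr r0; apply/le_anti; rewrite min_residual_ge0 andbT.
by rewrite -(normv0 R n) -r0 min_residual_le.
Qed.

(* If d(B,v) >= s+1, the unit vector normalize (P_s(B;v)(B) v) does at least as well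
   for B^T; otherwise some monic r of degree s annihilates v and the residual is 0. *)
Lemma min_residual_le_Phi_trmx B v : normv v = 1 -> min_residual B v <= Phi s B^T.
Proof.
move=> v1; have [gv|/not_grade_geP[r [mr sr r0]]] := pselect (grade_ge B v s.+1).
  have PBv := Ppoly_spec (grade_ge_leq (leqnSn s) gv).
  have x0 := pmv_P_neq0 PBv gv.
  apply: le_trans (min_residual_le_Phi _ (normv_normalize x0)).
  rewrite (min_residual_P PBv gv); apply: min_residual_ge => r.
  exact: normv_pmv_P_le_trmx.
rewrite (min_residual_eq0 mr sr r0).
exact: le_trans (min_residual_ge0 B^T v) (min_residual_le_Phi B^T v1).
Qed.

(* [v] only witnesses that the supremum is taken over a nonempty set. *)
Lemma Phi_le_trmx B v : normv v = 1 -> Phi s B <= Phi s B^T.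
Proof.
move=> v1; rewrite [Phi s B]PhiE; apply: ge_sup; first by exists (min_residual B v), v.
by move=> _ [w [w1 ->]]; apply: min_residual_le_Phi_trmx.
Qed.

Lemma Phi_trmx B v : normv v = 1 -> Phi s B^T = Phi s B.
Proof.
move=> v1; apply/le_anti/andP; split; last exact: Phi_le_trmx v1.
by have := Phi_le_trmx B^T v1; rewrite trmxK.
Qed.

End MinResidual.

Section HalfStep.
Variables (R : realType) (n : nat) (B : 'M[R]_n) (s : nat) (u : 'cV[R]_n).
Hypotheses (u1 : normv u = 1) (gu : grade_ge B u s.+1).

Let PBu : is_P B u s (Ppoly B u s) := Ppoly_spec (grade_ge_leq (leqnSn s) gu).

Local Notation x := (normalize (aci_wt B s u)).

Lemma aci_wt_neq0 : aci_wt B s u != 0.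
Proof. exact: pmv_P_neq0 PBu gu. Qed.

Lemma normv_aci_wt_le_Phi : normv (aci_wt B s u) <= Phi s B.
Proof. by rewrite -(min_residual_P PBu gu) min_residual_le_Phi. Qed.

Lemma normv_normalize_aci_wt : normv x = 1.
Proof. exact/normv_normalize/aci_wt_neq0. Qed.

Lemma grade_normalize_aci_wt : grade_ge B^T x s.+1.
Proof. exact: grade_trmx_normalize_pmv_P PBu gu. Qed.

Let QBx : is_P B^T x s (Ppoly B^T x s) :=
  Ppoly_spec (grade_ge_leq (leqnSn s) grade_normalize_aci_wt).

Lemma dotv_aci_vt_wt : dotv (aci_vt B s x) u = normv (aci_wt B s u).
Proof. by case: QBx => mQ [sQ _]; apply: (dotv_pmv_trmx_P PBu gu). Qed.

Lemma normv_aci_wt_le_vt : normv (aci_wt B s u) <= normv (aci_vt B s x).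
Proof. by case: QBx => mQ [sQ _]; apply: (normv_pmv_P_le_trmx PBu gu). Qed.

Lemma aci_vt_neq0 : aci_vt B s x != 0.
Proof.
rewrite -normv_gt0 (lt_le_trans _ normv_aci_wt_le_vt) // normv_gt0.
exact: aci_wt_neq0.
Qed.

End HalfStep.

Section ArnoldiCrossIteration.
Variables (R : realType) (n : nat) (A : 'M[R]_n) (s : nat) (v0 : 'cV[R]_n).
Hypotheses (v01 : normv v0 = 1) (gv0 : grade_ge A v0 s.+1).

Local Notation v := (aci_v A s v0).
Local Notation w := (aci_w A s v0).
Local Notation wt := (aci_wtil A s v0).
Local Notation vt := (aci_vtil A s v0).

(* The second half-step is the first one for A^T, started at w_k. *)
Lemma aci_tilE k :
  vt k.+1 = aci_wt A^T s (w k) /\ wt k.+1 = aci_vt A^T s (normalize (vt k.+1)).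
Proof. by rewrite /aci_vt trmxK. Qed.

Lemma aci_v_spec k : normv (v k) = 1 /\ grade_ge A (v k) s.+1.
Proof.
elim: k => [|k [_ gv]] //; have gw := grade_normalize_aci_wt gv.
split; first exact: normv_normalize_aci_wt gw.
by have := grade_normalize_aci_wt gw; rewrite trmxK.
Qed.

Lemma aci_w_spec k : normv (w k) = 1 /\ grade_ge A^T (w k) s.+1.
Proof.
have [_ gv] := aci_v_spec k.
by split; [apply: normv_normalize_aci_wt gv | apply: grade_normalize_aci_wt].
Qed.

Lemma aci_w_step k :
  [/\ wt k != 0, vt k.+1 != 0, dotv (vt k.+1) (v k) = normv (wt k)
     & normv (wt k) <= normv (vt k.+1)].
Proof.
have [v1 gv] := aci_v_spec k.
by split; [apply: aci_wt_neq0 gv | apply: aci_vt_neq0 v1 gv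
          | apply: dotv_aci_vt_wt gv | apply: normv_aci_wt_le_vt v1 gv].
Qed.

Lemma aci_v_step k :
  dotv (wt k.+1) (w k) = normv (vt k.+1) /\ normv (vt k.+1) <= normv (wt k.+1).
Proof.
have [w1 gw] := aci_w_spec k; have [-> ->] := aci_tilE k.
by split; [apply: dotv_aci_vt_wt gw | apply: normv_aci_wt_le_vt w1 gw].
Qed.

Lemma aci_vtil_le_Phi k : normv (vt k.+1) <= Phi s A^T.
Proof. by have [w1 gw] := aci_w_spec k; apply: normv_aci_wt_le_Phi w1 gw. Qed.

End ArnoldiCrossIteration.

Theorem theorem3p3 (R : realType) (n : nat) (A : 'M[R]_n) (s : nat)
  (v0 : 'cV[R]_n) :
  (1 <= s)%N -> minpoly_deg_gt A s ->
  normv v0 = 1 -> grade_ge A v0 s.+1 ->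
  let v := aci_v A s v0 in
  let w := aci_w A s v0 in
  let wt := aci_wtil A s v0 in
  let vt := aci_vtil A s v0 in
  (forall k : nat,
     wt k != 0 /\ vt k.+1 != 0 /\
     grade_ge A (v k) s.+1 /\ grade_ge A^T (w k) s.+1) /\
  (forall k : nat,
     normv (wt k) <= normv (vt k.+1) /\
     normv (vt k.+1) <= normv (wt k.+1) /\
     normv (wt k.+1) <= normv (vt k.+2) /\
     normv (vt k.+2) <= Phi s A^T) /\
  Phi s A^T = Phi s A /\
  (forall k : nat,
     normv (wt k) = normv (vt k.+1) <->
     exists alpha : R, alpha != 0 /\ v k = alpha *: v k.+1) /\
  (forall k : nat,
     normv (vt k.+1) = normv (wt k.+1) <->
     exists beta : R, beta != 0 /\ w k = beta *: w k.+1).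
Proof.
(* 1 <= s and s < d(A) only ensure that a starting vector with d(A,v0) >= s+1 exists. *)
move=> _ _ v01 gv0 v w wt vt.
have vS := aci_v_spec v01 gv0; have wS := aci_w_spec v01 gv0.
have wstep := aci_w_step v01 gv0; have vstep := aci_v_step v01 gv0.
split; [|split; [|split; [|split]]].
- move=> k; have [wt0 vt0 _ _] := wstep k.
  by do !split=> //; [case: (vS k) | case: (wS k)].
- move=> k; have [_ _ _ le_wv] := wstep k; have [_ le_vw] := vstep k.
  have [_ _ _ le_wv'] := wstep k.+1.
  by do !split=> //; apply: aci_vtil_le_Phi.
- exact: Phi_trmx v01.
- move=> k; have [wt0 _ vw _] := wstep k.
  by apply: normv_eq_dotv_unit vw; [case: (vS k) | rewrite normv_gt0].
- move=> k; have [_ vt0 _ _] := wstep k; have [wv _] := vstep k.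
  by apply: normv_eq_dotv_unit wv; [case: (wS k) | rewrite normv_gt0].
Qed.
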